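(* Let $k,l,m,n$ be positive integers with $k^n\equiv 1\pmod m$ and $l(k-1)\equiv 0\pmod m$, and let $G=\langle a,b;\ a^m=1,\ b^n=a^l,\ b^{-1}ab=a^k\rangle$. Then $G$ has trivial centre if and only if $(m,k-1)=1$ and $n=\mathrm{ind}_m(k)$.
   Context: $\mathrm{ind}_m(k)$ is the least positive integer $d$ with $k^d\equiv 1\pmod m$. *)

From mathcomp Require Import all_boot all_fingroup.
Set Implicit Arguments. Unset Strict Implicit. Unset Printing Implicit Defensive.

Definition is_ind (m k d : nat) : Prop :=
  [/\ 0 < d, k ^ d = 1 %[mod m] &
      forall e, 0 < e -> k ^ e = 1 %[mod m] -> d <= e].

(* Writing elements as a^i b^j (using b^n = a^l to reduce j below n), G has at
   most #[a] * n <= m * n elements.  Conversely, a and b act as permutations of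
   'I_m * 'I_n satisfying the relations and moving (0, 0) to every point, so
   #|G| >= m * n.  Hence #[a] = m and #[b] >= n, and a^i b^j is central iff
   k^j = 1 (mod m) and m | (k - 1) i.  The center is thus trivial iff the first
   condition forces j = 0 for j < n (that is, n = ind_m(k)) and the second
   forces m | i (that is, m is coprime to k - 1). *)

From mathcomp Require Import all_boot all_fingroup all_solvable.
Set Implicit Arguments. Unset Strict Implicit. Unset Printing Implicit Defensive.

Lemma eqn_modMl_dvdn m k i :
  0 < k -> (k * i == i %[mod m]) = (m %| (k - 1) * i).
Proof.
move=> k_gt0; rewrite -[in k * i](subnK k_gt0) mulnDl mul1n -{3}[i]add0n.
by rewrite eqn_modDr mod0n.
Qed.

Lemma expn_mul_eq_mod m k i e : k * i = i %[mod m] -> k ^ e * i = i %[mod m].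
Proof.
move=> ki; elim: e => [|e IHe]; first by rewrite mul1n.
by rewrite expnSr -mulnA -modnMmr ki modnMmr.
Qed.

Lemma modn_succ d s : (s %% d).+1 %% d = s.+1 %% d.
Proof. by rewrite -addn1 modnDml addn1. Qed.

Lemma coprime_of_dvdn_mull m c : 0 < m ->
  (forall i, m %| c * i -> m %| i) -> coprime m c.
Proof.
move=> m_gt0 dvd_m; set g := gcdn m c.
have g_gt0 : 0 < g by rewrite gcdn_gt0 m_gt0.
have q_gt0 : 0 < m %/ g by rewrite divn_gt0 // dvdn_leq // dvdn_gcdl.
have /dvd_m : m %| c * (m %/ g).
  rewrite -(divnK (dvdn_gcdr m c)) mulnAC -mulnA divnK ?dvdn_gcdl //.
  exact: dvdn_mull.
move=> /(dvdn_leq q_gt0); apply: contraLR.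
by rewrite -ltnNge /coprime eqn_leq g_gt0 andbT -ltnNge => /ltn_Pdiv->.
Qed.

Lemma cent1_conjg_fix (gT : finGroupType) (x y : gT) :
  (x \in 'C[y])%g = (x ^ y == x)%g.
Proof. by rewrite (sameP cent1P commgP) conjg_fix. Qed.

Section PermutationModel.
Variables k l m n : nat.
Hypotheses (k_gt0 : 0 < k) (m_gt0 : 0 < m) (n_gt0 : 0 < n).
Hypotheses (kn_mod : k ^ n = 1 %[mod m]) (lk_mod : l * (k - 1) = 0 %[mod m]).

Definition shift c (x : 'I_m) : 'I_m := Ordinal (ltn_pmod (x + c) m_gt0).

Lemma shift0 x : shift 0 x = x.
Proof. by apply: val_inj; rewrite /= addn0 modn_small. Qed.

Lemma shiftD c c' x : shift c' (shift c x) = shift (c + c') x.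
Proof. by apply: val_inj; rewrite /= modnDml addnA. Qed.

Lemma eq_shift c c' x : c = c' %[mod m] -> shift c x = shift c' x.
Proof. by move=> eq_c; apply: val_inj; rewrite /= -modnDmr eq_c modnDmr. Qed.

Lemma shift_inj c : injective (shift c).
Proof.
move=> x x' /(congr1 val) /= /eqP; rewrite eqn_modDr !modn_small //.
by move/eqP/val_inj.
Qed.

(* The level-[y] translation amount [k ^ (n - y)] makes [b^-1 a b = a^k] hold,
   and the carry [l] when [y] wraps around makes [b^n = a^l] hold. *)
Definition twist (y : 'I_n) := k ^ (n - y).

Lemma twist_ordS y : twist y = twist (ordS y) * k %[mod m].
Proof.
rewrite /twist /=; case: (ltngtP y.+1 n) => [lt_y1_n | | eq_y1_n].
- by rewrite (modn_small lt_y1_n) -subnSK // expnSr.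
- by rewrite ltnNge ltn_ord.
rewrite eq_y1_n modnn subn0 -modnMml kn_mod modnMml mul1n.
by rewrite -[n in n - _]eq_y1_n subSnn.
Qed.

Definition stepA (u : 'I_m * 'I_n) := (shift (twist u.2) u.1, u.2).
Definition stepB (u : 'I_m * 'I_n) := (shift (l * (n %| u.2.+1)) u.1, ordS u.2).

Lemma stepA_inj : injective stepA.
Proof.
move=> [x y] [x' y'] /pair_equal_spec[+ /= eq_y].
by rewrite -eq_y => /shift_inj /= ->.
Qed.

Lemma stepB_inj : injective stepB.
Proof.
move=> [x y] [x' y'] /pair_equal_spec[+ /ordS_inj /= eq_y].
by rewrite -eq_y => /shift_inj /= ->.
Qed.

Definition permA := perm stepA_inj.
Definition permB := perm stepB_inj.

Lemma permAX i u : (permA ^+ i)%g u = (shift (twist u.2 * i) u.1, u.2).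
Proof.
elim: i => [|i IHi]; first by case: u => x y; rewrite expg0 perm1 muln0 shift0.
by rewrite expgSr permM IHi permE /stepA /= shiftD mulnS addnC.
Qed.

Lemma permBX t u : (permB ^+ t)%g u =
  (shift (l * ((u.2 + t) %/ n)) u.1, Ordinal (ltn_pmod (u.2 + t) n_gt0)).
Proof.
elim: t => [|t IHt].
  rewrite expg0 perm1 addn0 divn_small // muln0 shift0.
  by case: u => x y; congr pair; apply: val_inj; rewrite /= modn_small.
rewrite expgSr permM IHt permE /stepB /= shiftD addnS divnS // -mulnDr addnC.
congr pair; last by apply: val_inj; rewrite /= modn_succ.
by rewrite /dvdn modn_succ.
Qed.

Lemma twist_mull y : twist y * l = l %[mod m].
Proof.
apply: expn_mul_eq_mod; apply/eqP; rewrite eqn_modMl_dvdn // mulnC.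
by apply/eqP; rewrite lk_mod mod0n.
Qed.

Lemma permA_m : (permA ^+ m = 1)%g.
Proof.
apply/permP=> u; rewrite permAX perm1 (@eq_shift _ 0) ?modnMl ?mod0n // shift0.
by case: u.
Qed.

Lemma permB_n : (permB ^+ n = permA ^+ l)%g.
Proof.
apply/permP=> u; rewrite permAX permBX.
have -> : (u.2 + n) %/ n = 1.
  by rewrite -[n in _ + n]mul1n addnC divnMDl // divn_small.
congr pair; first by apply: eq_shift; rewrite muln1 twist_mull.
by apply: val_inj; rewrite /= modnDr modn_small.
Qed.

Lemma permA_conj : (permA ^ permB = permA ^+ k)%g.
Proof.
have comm : (permA * permB = permB * permA ^+ k)%g.
  apply/permP=> u; rewrite !permM permAX !permE /stepA /stepB /= !shiftD.
  congr pair; apply: eq_shift; rewrite addnC; apply/eqP.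
  by rewrite eqn_modDl; apply/eqP; apply: twist_ordS.
by rewrite /conjg comm mulgA mulVg mul1g.
Qed.

Definition model := (<[permA]> <*> <[permB]>)%G.

Lemma model_homg :
  (model \homg Grp (a : b : a ^+ m, b ^+ n = a ^+ l, a ^ b = a ^+ k))%g.
Proof.
apply/existsP; exists (permA, permB); rewrite /= !xpair_eqE /=.
by rewrite permA_m permB_n permA_conj !eqxx.
Qed.

Lemma model_card : m * n <= #|model|.
Proof.
pose u0 := (Ordinal m_gt0, Ordinal n_gt0).
have -> : m * n = #|[set: 'I_m * 'I_n]| by rewrite cardsT card_prod !card_ord.
apply: leq_trans (leq_imset_card (fun g : {perm _} => g u0) model).
apply/subset_leq_card/subsetP=> -[i j] _; apply/imsetP.
exists (permA ^+ i * permB ^+ j)%g.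
  by rewrite groupM ?groupX ?mem_gen // inE cycle_id ?orbT.
rewrite permM permAX permBX /= add0n divn_small // muln0 shiftD addn0.
congr pair; apply: val_inj => /=; last by rewrite modn_small.
by rewrite add0n /twist subn0 -modnMml kn_mod modnMml mul1n modn_small.
Qed.

Lemma card_presented_ge (gT : finGroupType) (G : {group gT}) :
  (G \isog Grp (a : b : a ^+ m, b ^+ n = a ^+ l, a ^ b = a ^+ k))%g ->
  m * n <= #|G|.
Proof.
move=> isoG; apply: leq_trans model_card (leq_homg _).
by rewrite isoG model_homg.
Qed.

End PermutationModel.

Section CenterOfPresentedGroup.
Variables (k l m n : nat) (gT : finGroupType) (G : {group gT}) (a b : gT).
Hypotheses (k_gt0 : 0 < k) (m_gt0 : 0 < m) (n_gt0 : 0 < n).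
Hypothesis kn_mod : k ^ n = 1 %[mod m].
Hypotheses (defG : (<[a]> <*> <[b]>)%g = G) (am : (a ^+ m = 1)%g)
  (bn : (b ^+ n = a ^+ l)%g) (ab : (a ^ b = a ^+ k)%g).
Hypothesis card_G_ge : m * n <= #|G|.

Local Open Scope group_scope.

Lemma a_in_G : a \in G.
Proof. by rewrite -defG mem_gen // inE cycle_id. Qed.

Lemma b_in_G : b \in G.
Proof. by rewrite -defG mem_gen // inE cycle_id orbT. Qed.

Lemma conjg_a_bX j : a ^ (b ^+ j) = a ^+ (k ^ j).
Proof.
elim: j => [|j IHj]; first by rewrite conjg1 expg1.
by rewrite expgSr conjgM IHj conjXg ab -expgM expnS.
Qed.

Lemma G_mul_cycles : G :=: <[a]> * <[b]>.
Proof.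
by rewrite -defG norm_joinEr // cycle_subG inE -cycleJ ab cycle_subG mem_cycle.
Qed.

Lemma G_normal_form z : z \in G -> exists i j, j < n /\ z = a ^+ i * b ^+ j.
Proof.
rewrite G_mul_cycles => /mulsgP[_ _ /cycleP[i ->] /cycleP[j ->] ->].
exists (i + l * (j %/ n)), (j %% n); split; first by rewrite ltn_mod.
by rewrite {1}(divn_eq j n) expgD mulnC expgM bn -expgM expgD mulgA.
Qed.

Lemma card_G_le_order_a : #|G| <= #[a] * n.
Proof.
pose F (u : 'I_#[a] * 'I_n) := a ^+ u.1 * b ^+ u.2.
suff /subset_leq_card : G \subset F @: setT.
  move/leq_trans; apply; rewrite (leq_trans (leq_imset_card _ _)) //.
  by rewrite cardsT card_prod !card_ord.
apply/subsetP=> z /G_normal_form[i [j [lt_j_n ->]]]; apply/imsetP.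
exists (Ordinal (ltn_pmod i (order_gt0 a)), Ordinal lt_j_n) => //.
by rewrite /F /= expg_mod_order.
Qed.

Lemma order_a : #[a] = m.
Proof.
have dvd_a_m : #[a] %| m by rewrite order_dvdn am.
apply/eqP; rewrite eqn_leq dvdn_leq //=.
by rewrite -(leq_pmul2r n_gt0) (leq_trans card_G_ge card_G_le_order_a).
Qed.

Lemma leq_n_order_b : n <= #[b].
Proof.
rewrite -(leq_pmul2l m_gt0) (leq_trans card_G_ge) // -order_a G_mul_cycles.
by rewrite mul_cardG leq_pmulr ?cardG_gt0.
Qed.

Lemma eq_expg_a_mod i i' : (a ^+ i == a ^+ i') = (i == i' %[mod m]).
Proof. by rewrite eq_expg_mod_order order_a. Qed.

Lemma mem_center_aXbX i j :
  (a ^+ i * b ^+ j \in 'Z(G)) = (k ^ j == 1 %[mod m]) && (m %| (k - 1) * i).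
Proof.
rewrite inE groupM ?groupX ?a_in_G ?b_in_G //= -defG centY !cent_cycle inE.
rewrite (groupMl _ (groupX _ (cent1id a))) (groupMr _ (groupX _ (cent1id b))).
rewrite cent1C !cent1_conjg_fix.
rewrite conjg_a_bX conjXg ab -!expgM -{2}[a]expg1 !eq_expg_a_mod.
by rewrite eqn_modMl_dvdn.
Qed.

Lemma center_trivial_iff : 'Z(G) = 1 <-> coprime m (k - 1) /\ is_ind m k n.
Proof.
split=> [Z1 | [co_m_k1 [_ _ ind_min]]].
  have central_1 i j :
      k ^ j = 1 %[mod m] -> m %| (k - 1) * i -> a ^+ i * b ^+ j = 1.
    move=> kj dvd_m; apply/set1P.
    by rewrite -[[set 1]]Z1 mem_center_aXbX kj eqxx.
  split.
    apply: coprime_of_dvdn_mull m_gt0 _ => i dvd_m.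
    by rewrite -order_a order_dvdn -[a ^+ i]mulg1 -(expg0 b) central_1.
  split=> // e e_gt0 ke; apply: leq_trans leq_n_order_b (dvdn_leq e_gt0 _).
  by rewrite order_dvdn -[b ^+ e]mul1g -(expg0 a) central_1 ?muln0.
apply/trivgP/subsetP=> z Zz; have := subsetP (center_sub G) z Zz.
case/G_normal_form=> i [j [lt_j_n def_z]]; move: Zz.
rewrite def_z mem_center_aXbX Gauss_dvdr // => /andP[/eqP kj dvd_m_i].
have -> : j = 0 by case: (posnP j) => // /ind_min/(_ kj); rewrite leqNgt lt_j_n.
by rewrite mulg1 inE -order_dvdn order_a.
Qed.

End CenterOfPresentedGroup.

Theorem lemma2p2 (k l m n : nat) (gT : finGroupType) (G : {group gT}) :
  (0 < k)%N -> (0 < l)%N -> (0 < m)%N -> (0 < n)%N ->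
  (k ^ n = 1 %[mod m])%N -> (l * (k - 1) = 0 %[mod m])%N ->
  (G \isog Grp (a : b : a ^+ m, b ^+ n = a ^+ l, a ^ b = a ^+ k))%g ->
  (('Z(G))%g = 1%g <-> coprime m (k - 1) /\ is_ind m k n).
Proof.
move=> k_gt0 _ m_gt0 n_gt0 kn_mod lk_mod isoG.
have card_G := card_presented_ge k_gt0 m_gt0 n_gt0 kn_mod lk_mod isoG.
case/existsP: (isoGrp_hom isoG) => -[a b] /=; rewrite !xpair_eqE /=.
case/and4P=> /eqP defG /eqP am /eqP bn /eqP ab.
exact: (center_trivial_iff k_gt0 m_gt0 n_gt0 kn_mod defG am bn ab card_G).
Qed.
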